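(* Let $G$ be a connected graph on an odd number $n\geq 3$ of vertices. If there is a vertex $v\in V(G)$ such that each distance set $N_i(v)$, $i=1,\dots,\epsilon(v)$, is an independent set, then $q(G)\geq 3$.
   Context: For a graph $G$ on $n$ vertices, $\mathcal{S}(G)$ is the set of real symmetric $n\times n$ matrices $A=[a_{ij}]$ with $a_{ij}\neq0$ for $i\ne j$ iff $\{i,j\}\in E(G)$ (diagonal unrestricted); $q(G)$ is the minimum number of distinct eigenvalues of a matrix in $\mathcal{S}(G)$. $N_i(v)$ is the set of vertices at distance exactly $i$ from $v$, and $\epsilon(v)$ is the maximum distance from $v$ to a vertex of $G$. *)

From HB Require Import structures.
From mathcomp Require Import all_boot all_order all_algebra.
From mathcomp Require Import reals.
Set Implicit Arguments. Unset Strict Implicit. Unset Printing Implicit Defensive.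
Import Order.TTheory GRing.Theory Num.Theory.

Section Graphs.
Variable n : nat.
Implicit Types (e : rel 'I_n) (u v w : 'I_n).

Definition simple_graph e := symmetric e /\ irreflexive e.

Definition walk_len e u w k : bool :=
  [exists p : k.-tuple 'I_n, path e u p && (last u p == w)].

Definition connected_graph e := forall u w, connect e u w.

(* graph distance: least k < n with a walk of length k (n if unreachable) *)
Definition gdist e u w : nat := find (walk_len e u w) (iota 0 n).

Definition dist_set e v (i : nat) : {set 'I_n} := [set w | gdist e v w == i].

Definition ecc e v : nat := \max_(w : 'I_n) gdist e v w.

Definition independent e (S : {set 'I_n}) :=
  forall x y, x \in S -> y \in S -> ~~ e x y.

End Graphs.

Local Open Scope ring_scope.

Definition in_SG (R : realType) (n : nat) (e : rel 'I_n) (A : 'M[R]_n) :=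
  A^T = A /\ forall i j : 'I_n, i != j -> (A i j != 0) = e i j.

(* q(G) >= k: every matrix in S(G) has at least k distinct eigenvalues;
   the (finite) set of eigenvalues of A is listed without repetition by s *)
Definition q_at_least (R : realType) (n : nat) (e : rel 'I_n) (k : nat) :=
  forall A : 'M[R]_n, in_SG e A ->
  forall s : seq R, uniq s -> (forall a, eigenvalue A a = (a \in s)) ->
  (k <= size s)%N.

From HB Require Import structures.
From mathcomp Require Import all_boot all_order all_algebra.
From mathcomp Require Import reals complex ring.
Set Implicit Arguments. Unset Strict Implicit. Unset Printing Implicit Defensive.
Import Order.TTheory GRing.Theory Num.Theory.

(* If A in S(G) has at most two eigenvalues a, b, then (A - a)(A - b) = 0, so
   B = 2A - (a + b) is symmetric with the off-diagonal pattern of G and B^2 = k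
   is scalar.  The parity of the distance to v gives signs sg with
   sg y = - sg x on every edge, because the distance sets are independent;
   let S = diag(sg).  Then BS + SB is diagonal and commutes with B, so
   sg x * B x x is constant along edges, equal to some t, and BS + SB = 2t.
   Hence M = B - tS anticommutes with S and M^2 = k - t^2, which gives
   (k - t^2) tr S = 0.  As n is odd, tr S <> 0, so M^2 = 0, M = 0 by symmetry,
   and B is diagonal: G has no edge, which is absurd. *)

Section GraphDistance.
Variables (n : nat) (e : rel 'I_n).

Lemma walk_len0 u w : walk_len e u w 0 -> u = w.
Proof. by case/existsP => p /andP[_]; rewrite tuple0 /= => /eqP. Qed.

Lemma walk_len_rcons u x y k : walk_len e u x k -> e x y -> walk_len e u y k.+1.
Proof.
case/existsP => p /andP[pp /eqP lp] exy; apply/existsP.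
have sz : size (rcons p y) == k.+1 by rewrite size_rcons size_tuple.
by exists (Tuple sz); rewrite /= rcons_path pp lp exy last_rcons /=.
Qed.

Lemma connect_walk_len u w : connect e u w -> exists2 k, k < n & walk_len e u w k.
Proof.
case/connectP => p pp ->; case: (shortenP pp) => p' pp' up' _.
exists (size p').
  by have := max_card (mem (u :: p')); rewrite card_ord (card_uniqP up').
by apply/existsP; exists (in_tuple p'); rewrite /= pp' eqxx.
Qed.

Lemma connected_has_edge : connected_graph e -> (1 < n)%N -> exists x y, e x y.
Proof.
move=> conn n_gt1; pose x0 := Ordinal (ltnW n_gt1); pose x1 := Ordinal n_gt1.
have /connectP[[|z p] /=] := conn x0 x1; first by move=> _ /(congr1 val).
by case/andP => x0z _ _; exists x0, z.
Qed.

Hypothesis e_connected : connected_graph e.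

Lemma has_walk_len u w : has (walk_len e u w) (iota 0 n).
Proof.
have [k kn wk] := connect_walk_len (e_connected u w); apply/hasP; exists k => //.
by rewrite mem_iota add0n kn.
Qed.

Lemma gdist_lt u w : (gdist e u w < n)%N.
Proof. by have := has_walk_len u w; rewrite has_find size_iota. Qed.

Lemma walk_len_gdist u w : walk_len e u w (gdist e u w).
Proof. by have := nth_find 0 (has_walk_len u w); rewrite nth_iota ?add0n ?gdist_lt. Qed.

Lemma gdist_min u w k : (k < n)%N -> walk_len e u w k -> (gdist e u w <= k)%N.
Proof.
move=> kn wk; rewrite leqNgt; apply/negP => /(before_find 0).
by rewrite nth_iota // add0n wk.
Qed.

Lemma gdist_edge u x y : e x y -> (gdist e u y <= (gdist e u x).+1)%N.
Proof.
move=> exy; have [h|h] := ltnP (gdist e u x).+1 n.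
  exact/(gdist_min h)/(walk_len_rcons (walk_len_gdist u x) exy).
exact: leq_trans (ltnW (gdist_lt u y)) h.
Qed.

Lemma gdist_eq0 u w : gdist e u w = 0%N -> u = w.
Proof. by move=> h; apply: walk_len0; rewrite -h walk_len_gdist. Qed.

Lemma odd_gdist_edge v x y : simple_graph e ->
  (forall i, (1 <= i <= ecc e v)%N -> independent e (dist_set e v i)) ->
  e x y -> odd (gdist e v y) = ~~ odd (gdist e v x).
Proof.
move=> [esym eirr] Nindep exy.
have le_yx := gdist_edge v exy; have le_xy : (gdist e v x <= (gdist e v y).+1)%N.
  by apply: gdist_edge; rewrite esym.
case: (ltngtP (gdist e v x) (gdist e v y)) => [lt_xy|lt_yx|eq_xy].
- by have /eqP-> : gdist e v y == (gdist e v x).+1 by rewrite eqn_leq le_yx lt_xy.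
- have /eqP-> : gdist e v x == (gdist e v y).+1 by rewrite eqn_leq le_xy lt_yx.
  by rewrite /= negbK.
- exfalso; have [dx0|dx_gt0] := posnP (gdist e v x).
    have vx := gdist_eq0 dx0; have vy : v = y by apply: gdist_eq0; rewrite -eq_xy.
    by move: exy; rewrite -vx -vy eirr.
  have /Nindep/(_ x y) : (1 <= gdist e v x <= ecc e v)%N.
    by rewrite dx_gt0 (leq_bigmax (F := gdist e v)).
  by rewrite !inE -eq_xy eqxx exy => /(_ isT isT).
Qed.

End GraphDistance.

Local Open Scope ring_scope.

Lemma sum_signr_neq0 (R : numDomainType) (T : finType) (g : T -> nat) :
  odd #|T| -> \sum_(x : T) (-1) ^+ g x != 0 :> R.
Proof.
move=> oddT.
have signE x : (-1) ^+ g x = 1 - (odd (g x))%:R *+ 2 :> R.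
  rewrite -signr_odd; case: odd => /=; rewrite ?mul0rn ?subr0 //.
  by rewrite mulr1n mulr2n opprD addrA subrr add0r.
rewrite (eq_bigr _ (fun x _ => signE x)) sumrB sumr_const sumrMnl -natr_sum.
rewrite -mulrnA subr_eq0 eqr_nat; apply: contraTneq oddT => ->.
by rewrite oddM andbF.
Qed.

Lemma sym_mulmx_self_eq0 (R : realDomainType) n (M : 'M[R]_n) :
  M^T = M -> M *m M = 0 -> M = 0.
Proof.
move=> Msym MM0; apply/matrixP => x y; rewrite mxE; apply/eqP; rewrite -sqrf_eq0.
have /matrixP/(_ x x) := MM0; rewrite !mxE => /eqP.
rewrite (eq_bigr (fun j => M x j ^+ 2)) => [|j _]; last by rewrite -{2}Msym mxE expr2.
rewrite psumr_eq0 => [/allP/(_ y (mem_index_enum y))/implyP/(_ isT)//|j _].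
exact: sqr_ge0.
Qed.

Lemma comm_diag_mx_support (R : idomainType) n (A : 'M[R]_n) (d : 'rV[R]_n) x y :
  A *m diag_mx d = diag_mx d *m A -> A x y != 0 -> d 0 x = d 0 y.
Proof.
move=> /matrixP/(_ x y); rewrite mul_mx_diag mul_diag_mx !mxE [d 0 x * _]mulrC.
by move=> /mulfI Axy /Axy.
Qed.

Lemma anticomm_sqr_scalar_trace (R : comPzRingType) n (M S : 'M[R]_n) c :
  M *m S + S *m M = 0 -> M *m M = c%:M -> (c * \tr S) *+ 2 = 0.
Proof.
move=> /eqP; rewrite addr_eq0 => /eqP SM MM.
have trSMM : \tr (S *m (M *m M)) = c * \tr S by rewrite MM mul_mx_scalar mxtraceZ.
have : \tr (S *m M *m M) = - \tr (S *m M *m M).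
  by rewrite {1}mxtrace_mulC mulmxA SM mulNmx raddfN.
by rewrite -mulmxA trSMM mulr2n => /eqP; rewrite -addr_eq0 => /eqP.
Qed.

Lemma quadratic_annihilator_shift (R : comPzRingType) n (A : 'M[R]_n) a b :
  (A - a%:M) *m (A - b%:M) = 0 ->
  (A *+ 2 - (a + b)%:M) *m (A *+ 2 - (a + b)%:M) = ((a - b) ^+ 2)%:M.
Proof.
rewrite !mulmxE; set X := A - a%:M; set Y := A - b%:M => XY.
have YE : Y = X - (b - a)%:M by rewrite /X /Y raddfB opprB addrA subrK.
have YX : Y * X = 0.
  by rewrite {1}YE mulrBl -mulmxE -scalar_mxC mulmxE -mulrBr -YE.
rewrite (_ : A *+ 2 - _ = X + Y); last by rewrite /X /Y raddfD addrACA mulr2n opprD.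
rewrite (_ : ((a - b) ^+ 2)%:M = (X - Y) * (X - Y)); last first.
  by rewrite YE opprB [X + _]addrC subrK -mulmxE -scalar_mxM -expr2 -sqrrN opprB.
clearbody X Y.
by rewrite !(mulrDl, mulrDr, mulrN, mulNr, opprK) XY YX !oppr0.
Qed.

Lemma conj_diag_quadratic_annihilator (F : fieldType) n (P : 'M[F]_n) (d : 'rV_n) a b :
  P \in unitmx -> (forall j, d 0 j = a \/ d 0 j = b) ->
  let A := invmx P *m diag_mx d *m P in (A - a%:M) *m (A - b%:M) = 0.
Proof.
move=> Pu dab A.
have conj_shift c : A - c%:M = invmx P *m diag_mx (d - const_mx c) *m P.
  rewrite linearB /= diag_const_mx mulmxBr mulmxBl mul_mx_scalar -scalemxAl.
  by rewrite mulVmx // scalemx1.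
rewrite !conj_shift -!mulmxA [P *m _]mulmxA mulmxV // mul1mx.
rewrite [X in invmx P *m X]mulmxA (_ : diag_mx _ *m diag_mx _ = 0) ?mul0mx ?mulmx0 //.
apply/matrixP => i j; rewrite mul_diag_mx !mxE.
by have [->|->] := dab i; rewrite subrr ?mul0r // mul0rn mulr0.
Qed.

Section RealSymmetric.
Variable R : rcfType.
Local Notation C := (R[i]).

Lemma realsym_diagonalization n (A : 'M[R]_n) : A^T = A ->
  exists P, exists d : 'rV[C]_n, [/\ P \in unitmx,
    map_mx (real_complex R) A = invmx P *m diag_mx d *m P &
    forall j, exists2 r, eigenvalue A r & d 0 j = real_complex R r].
Proof.
move=> Asym; set Ac := map_mx (real_complex R) A.
have Areal : Ac \is a realmx by apply/mxOverP => i j; rewrite mxE complex_real.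
have Asy : Ac \is symmetricmx.
  by apply/is_hermitianmxP; rewrite expr0 scale1r map_mx_id // /Ac map_trmx Asym.
have Aherm := realsym_hermsym Asy Areal.
have /orthomx_spectralP Aeq := hermitian_normalmx Aherm.
have Pu := spectral_unit Ac; have dreal := hermitian_spectral_diag_real Aherm.
move: Aeq Pu dreal; set P := spectralmx Ac; set D := spectral_diag Ac => Aeq Pu dreal.
exists P, D; split => // j.
have /complex_realP [r dr] := mxOverP dreal 0 j.
suff : eigenvalue Ac (D 0 j) by rewrite dr eigenvalue_map => Ar; exists r.
apply/eigenvalueP; exists (delta_mx 0 j *m P).
  rewrite [in LHS]Aeq !mulmxA mulmxK // mul_mx_diag scalemxAl; congr (_ *m _).
  apply/matrixP => i k; rewrite !mxE ord1 eqxx /=.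
  by case: eqP => [->|_]; rewrite ?mulr1 ?mul1r ?mulr0 ?mul0r.
rewrite mulmx_free_eq0 ?row_free_unit //; apply/eqP => /matrixP/(_ 0 j).
by rewrite !mxE !eqxx => /eqP; rewrite oner_eq0.
Qed.

Lemma realsym_two_eigenvalues_annihilator n (A : 'M[R]_n) (s : seq R) :
  A^T = A -> (forall a, eigenvalue A a -> a \in s) -> (size s <= 2)%N ->
  exists a b, (A - a%:M) *m (A - b%:M) = 0.
Proof.
move=> Asym As s_le2.
have [a [b sab]] : exists a b, forall r, r \in s -> r = a \/ r = b.
  case: s s_le2 {As} => [|a [|b []]] // _.
  - by exists 0, 0.
  - by exists a, a => r; rewrite inE => /eqP; left.
  - by exists a, b => r; rewrite !inE => /orP[] /eqP; [left | right].
have [P [d [Pu Aeq dA]]] := realsym_diagonalization Asym.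
exists a, b; apply/eqP; rewrite -(map_mx_eq0 (real_complex R)).
rewrite map_mxM !map_mxB !map_scalar_mx /= Aeq conj_diag_quadratic_annihilator //.
by move=> j; have [r /As/sab[]-> ->] := dA j; [left | right].
Qed.
End RealSymmetric.


Section SignAlternatingSquareRoot.
Variables (R : realDomainType) (n : nat) (e : rel 'I_n).
Variables (sg : 'I_n -> R) (B : 'M[R]_n) (k : R).
Hypotheses (B_sym : B^T = B) (B_pattern : forall x y, x != y -> (B x y != 0) = e x y).
Hypotheses (sg_sign : forall x, sg x ^+ 2 = 1) (sg_alt : forall x y, e x y -> sg y = - sg x).
Hypothesis (B_sqr : B *m B = k%:M).

Let S := diag_mx (\row_x sg x).

Lemma sign_mx_sqr : S *m S = 1%:M.
Proof.
by apply/matrixP => x y; rewrite mul_diag_mx !mxE mulrnAr -expr2 sg_sign.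
Qed.

Lemma sign_anticommutator :
  B *m S + S *m B = diag_mx (\row_x (sg x * B x x *+ 2)).
Proof.
apply/matrixP => x y; rewrite mul_mx_diag mul_diag_mx !mxE.
have [<-|xy] := eqVneq x y; first by rewrite mulr1n [B x x * _]mulrC mulr2n.
rewrite mulr0n; have [->|Bxy] := eqVneq (B x y) 0; first by rewrite mul0r mulr0 addr0.
by rewrite (sg_alt (_ : e x y)) -?B_pattern // mulrN mulrC addNr.
Qed.

Lemma sign_anticommutator_comm :
  B *m (B *m S + S *m B) = (B *m S + S *m B) *m B.
Proof. by rewrite mulmxDr mulmxDl !mulmxA B_sqr -!mulmxA B_sqr scalar_mxC addrC. Qed.

Hypothesis e_connected : connected_graph e.

Lemma sign_weighted_diag_const x y : sg x * B x x = sg y * B y y.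
Proof.
pose d := \row_z (sg z * B z z *+ 2).
suff /closed_connect/(_ x y (e_connected x y)) :
  closed e [pred z | sg z * B z z == sg x * B x x] by rewrite !inE eqxx => /esym/eqP.
move=> u w euw; have [<-//|uw] := eqVneq u w.
have := comm_diag_mx_support (d := d) _ (_ : B u w != 0).
rewrite -sign_anticommutator sign_anticommutator_comm B_pattern // => /(_ erefl euw).
by rewrite /d !mxE !inE => /eqP; rewrite eqrMn2r /= => /eqP->.
Qed.

Lemma sign_anticommutator_scalar x0 :
  B *m S + S *m B = (sg x0 * B x0 x0 *+ 2)%:M.
Proof.
rewrite sign_anticommutator; apply/matrixP => x y.
by rewrite !mxE (sign_weighted_diag_const x x0).
Qed.

Hypothesis sg_sum : \sum_x sg x != 0.

Lemma sign_alternating_sqrt_scalar x0 : B = (sg x0 * B x0 x0) *: S.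
Proof.
set t := sg x0 * B x0 x0; set M := B - t *: S.
have anti : B *m S + S *m B = (t *+ 2)%:M by exact: sign_anticommutator_scalar.
have M_anti : M *m S + S *m M = 0.
  rewrite /M mulmxBl mulmxBr -scalemxAl -scalemxAr sign_mx_sqr addrACA -opprD anti.
  by rewrite scalemx1 -raddfD /= -mulr2n subrr.
have M_sqr : M *m M = (k - t ^+ 2)%:M.
  rewrite /M mulmxBl !mulmxBr -!scalemxAl -!scalemxAr scalerA -expr2 B_sqr sign_mx_sqr.
  rewrite opprB addrACA -opprD -scalerDr anti scalemx1 scale_scalar_mx.
  by rewrite -raddfD -raddfB /=; congr (_%:M); ring.
have k_sqr : k - t ^+ 2 = 0.
  move: (anticomm_sqr_scalar_trace M_anti M_sqr) => /eqP.
  rewrite mulrn_eq0 mulf_eq0 /= mxtrace_diag (eq_bigr sg) => [|x _]; last by rewrite mxE.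
  by rewrite (negPf sg_sum) orbF => /eqP.
have M_sym : M^T = M by rewrite /M linearB linearZ /= B_sym tr_diag_mx.
apply/eqP; rewrite -subr_eq0 -/M; apply/eqP/sym_mulmx_self_eq0 => //.
by rewrite M_sqr k_sqr raddf0.
Qed.

End SignAlternatingSquareRoot.

Theorem mainTheorem10 (R : realType) (n : nat) (e : rel 'I_n) :
  simple_graph e -> connected_graph e -> odd n -> (3 <= n)%N ->
  (exists v : 'I_n, forall i : nat, (1 <= i <= ecc e v)%N ->
     independent e (dist_set e v i)) ->
  q_at_least R e 3.
Proof.
move=> e_simple e_conn odd_n n_ge3 [v Nindep] A [A_sym A_pattern] s _ A_eig.
rewrite leqNgt; apply/negP => s_le2.
have A_eig_s r : eigenvalue A r -> r \in s by rewrite A_eig.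
have [a [b Aab]] := realsym_two_eigenvalues_annihilator A_sym A_eig_s s_le2.
set B := A *+ 2 - (a + b)%:M.
have B_sym : B^T = B by rewrite /B linearB linearMn /= A_sym tr_scalar_mx.
have B_pattern x y : x != y -> (B x y != 0) = e x y.
  by move=> xy; rewrite !mxE (negPf xy) mulr0n subr0 -mulr2n mulrn_eq0 A_pattern.
pose sg x : R := (-1) ^+ gdist e v x.
have sg_alt x y : e x y -> sg y = - sg x.
  move=> exy; rewrite /sg -signr_odd (odd_gdist_edge e_conn e_simple Nindep exy).
  by rewrite signrN signr_odd.
have sg_sum : \sum_x sg x != 0 by apply: sum_signr_neq0; rewrite card_ord.
have B_diag := sign_alternating_sqrt_scalar B_sym B_pattern (fun x => sqrr_sign _ _) sg_alt
  (quadratic_annihilator_shift Aab) e_conn sg_sum v.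
have [x [y exy]] := connected_has_edge e_conn (leq_trans (isT : (1 < 3)%N) n_ge3).
have xy : x != y by apply: contraTneq exy => ->; rewrite e_simple.2.
by move: (B_pattern x y xy); rewrite exy B_diag !mxE (negPf xy) mulr0n mulr0 eqxx.
Qed.
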